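(* Consider the linear system $x_{k+1}=Ax_k+w_k$ ($w_k$ i.i.d. zero-mean Gaussian, covariance $Q$) with $M$ sensors $y_{m,k}=C_mx_k+v_{m,k}$ ($v_{m,k}$ zero-mean Gaussian, covariance $R_m$), each running a local Kalman filter with filtered error covariances $P^s_{m,k|k}$, $k=1,2,\dots$. Let $f(X)=AXA^T+Q$ and $\mathcal{S}=\{f^n(P^s_{m,k|k}): m=1,\dots,M,\ n=0,1,\dots,\ k=1,2,\dots\}$. Let $\lambda_m\in(0,1]$, $E_m\ge0$, $\beta\in(0,1)$, $K\ge1$. Define $J_k:\mathcal{S}\to\mathbb{R}$ by $J_{K+1}\equiv0$ and, for $k=K,\dots,1$, $$J_k(\tilde P)=\min\Big\{\beta\,\mathrm{tr}f(\tilde P)+J_{k+1}(f(\tilde P)),\ \min_{m}\big[\beta(\lambda_m\mathrm{tr}P^s_{m,k|k}+(1-\lambda_m)\mathrm{tr}f(\tilde P))+(1-\beta)E_m+\lambda_mJ_{k+1}(P^s_{m,k|k})+(1-\lambda_m)J_{k+1}(f(\tilde P))\big]\Big\}.$$ Then each $J_k$, $k=1,\dots,K+1$, is increasing, i.e. for $X,Y\in\mathcal{S}$ with $X\le Y$ one has $J_k(X)\le J_k(Y)$.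
   Context: For symmetric matrices, $X\le Y$ means $Y-X$ is positive semidefinite. $f^n$ denotes the $n$-fold composition of $f$, with $f^0(X)=X$. *)

From HB Require Import structures.
From mathcomp Require Import all_boot all_order all_algebra.
Set Implicit Arguments. Unset Strict Implicit. Unset Printing Implicit Defensive.
Import Order.TTheory GRing.Theory Num.Theory.
Local Open Scope ring_scope.

Definition psd (R : realFieldType) (n : nat) (X : 'M[R]_n) : Prop :=
  X^T = X /\ forall v : 'cV[R]_n, 0 <= (v^T *m X *m v) 0 0.

Definition pd (R : realFieldType) (n : nat) (X : 'M[R]_n) : Prop :=
  X^T = X /\ forall v : 'cV[R]_n, v != 0 -> 0 < (v^T *m X *m v) 0 0.

Definition loewner_le (R : realFieldType) (n : nat) (X Y : 'M[R]_n) : Prop :=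
  psd (Y - X).

Definition fmap (R : realFieldType) (n : nat) (A Q X : 'M[R]_n) : 'M[R]_n :=
  A *m X *m A^T + Q.

(* Kalman measurement update of a predicted covariance P with sensor (C, Rv). *)
Definition kf_update (R : realFieldType) (n p : nat)
    (C : 'M[R]_(p, n)) (Rv : 'M[R]_p) (P : 'M[R]_n) : 'M[R]_n :=
  P - P *m C^T *m invmx (C *m P *m C^T + Rv) *m C *m P.

(* Filtered error covariance P^s_{m,k|k} of the local Kalman filter of a
   sensor (C, Rv), started from the initial covariance P0 = P_{0|0}:
   P_{k|k} = update(f(P_{k-1|k-1})). *)
Fixpoint Pfilt (R : realFieldType) (n p : nat) (A Q P0 : 'M[R]_n)
    (C : 'M[R]_(p, n)) (Rv : 'M[R]_p) (k : nat) : 'M[R]_n :=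
  match k with
  | 0 => P0
  | k'.+1 => kf_update C Rv (fmap A Q (Pfilt A Q P0 C Rv k'))
  end.

Definition inS (R : realFieldType) (n M : nat) (p : 'I_M -> nat)
    (A Q P0 : 'M[R]_n) (C : forall m : 'I_M, 'M[R]_(p m, n))
    (Rv : forall m : 'I_M, 'M[R]_(p m)) (X : 'M[R]_n) : Prop :=
  exists (m : 'I_M) (j k : nat),
    (1 <= k)%N /\ X = iter j (fmap A Q) (Pfilt A Q P0 (C m) (Rv m) k).

(* Backward recursion: Jrev j is J_{K+1-j}. Jrev 0 = J_{K+1} = 0, and
   Jrev j.+1 = J_k with k = K - j, computed from Jrev j = J_{k+1}.
   min{ a, min_m b_m } is written \big[min/a]_(m < M) b_m. *)
Fixpoint Jrev (R : realFieldType) (n M : nat) (p : 'I_M -> nat)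
    (A Q P0 : 'M[R]_n) (C : forall m : 'I_M, 'M[R]_(p m, n))
    (Rv : forall m : 'I_M, 'M[R]_(p m)) (lam E : 'I_M -> R) (beta : R)
    (K : nat) (j : nat) : 'M[R]_n -> R :=
  match j with
  | 0 => fun _ => 0
  | j'.+1 => fun Pt =>
      let k := (K - j')%N in
      let Jn := Jrev A Q P0 C Rv lam E beta K j' in
      let fP := fmap A Q Pt in
      \big[Order.min/(beta * \tr fP + Jn fP)]_(m < M)
        (beta * (lam m * \tr (Pfilt A Q P0 (C m) (Rv m) k)
                 + (1 - lam m) * \tr fP)
         + (1 - beta) * E m
         + lam m * Jn (Pfilt A Q P0 (C m) (Rv m) k)
         + (1 - lam m) * Jn fP)
  end.

Definition J (R : realFieldType) (n M : nat) (p : 'I_M -> nat)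
    (A Q P0 : 'M[R]_n) (C : forall m : 'I_M, 'M[R]_(p m, n))
    (Rv : forall m : 'I_M, 'M[R]_(p m)) (lam E : 'I_M -> R) (beta : R)
    (K k : nat) : 'M[R]_n -> R :=
  Jrev A Q P0 C Rv lam E beta K (K.+1 - k).

From HB Require Import structures.
From mathcomp Require Import all_boot all_order all_algebra.
Set Implicit Arguments. Unset Strict Implicit. Unset Printing Implicit Defensive.
Import Order.TTheory GRing.Theory Num.Theory.
Local Open Scope ring_scope.

(* The cost-to-go functions are in fact increasing on all matrices, not only
   on S, and this follows by backward induction on k. The prediction map
   f(X) = A X A^T + Q preserves the Loewner order and the trace is
   Loewner-monotone, so, given that J_{k+1} is increasing, every branch of
   the minimum defining J_k is a constant plus a nonnegative combination of
   the increasing quantities tr f(X) and J_{k+1}(f(X)); a minimum of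
   increasing functions is increasing. *)

Lemma psd_trace_ge0 (R : realFieldType) (n : nat) (X : 'M[R]_n) :
  psd X -> 0 <= \tr X.
Proof.
move=> [_ X_ge0]; apply: sumr_ge0 => i _.
by have := X_ge0 (delta_mx i 0); rewrite trmx_delta -rowE -colE !mxE.
Qed.

Lemma loewner_le_trace (R : realFieldType) (n : nat) (X Y : 'M[R]_n) :
  loewner_le X Y -> \tr X <= \tr Y.
Proof. by move=> /psd_trace_ge0; rewrite linearB subr_ge0. Qed.

Lemma psd_mulmx_tr (R : realFieldType) (m n : nat) (B : 'M[R]_(m, n))
    (X : 'M[R]_n) :
  psd X -> psd (B *m X *m B^T).
Proof.
move=> [X_sym X_ge0]; split; first by rewrite !trmx_mul trmxK X_sym mulmxA.
by move=> v; have := X_ge0 (B^T *m v); rewrite trmx_mul trmxK !mulmxA.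
Qed.

Lemma fmap_loewner_mono (R : realFieldType) (n : nat) (A Q X Y : 'M[R]_n) :
  loewner_le X Y -> loewner_le (fmap A Q X) (fmap A Q Y).
Proof.
rewrite /loewner_le /fmap opprD addrACA subrr addr0 -mulmxBl -mulmxBr.
exact: psd_mulmx_tr.
Qed.

Section CostToGo.

Variables (R : realFieldType) (n M : nat) (p : 'I_M -> nat).
Variables (A Q P0 : 'M[R]_n) (C : forall m : 'I_M, 'M[R]_(p m, n)).
Variables (Rv : forall m : 'I_M, 'M[R]_(p m)) (lam E : 'I_M -> R).
Variables (beta : R) (K : nat).
Hypothesis lam_unit : forall m, 0 <= lam m <= 1.
Hypothesis beta_ge0 : 0 <= beta.

Lemma Jrev_loewner_mono (j : nat) (X Y : 'M[R]_n) :
  loewner_le X Y ->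
  Jrev A Q P0 C Rv lam E beta K j X <= Jrev A Q P0 C Rv lam E beta K j Y.
Proof.
elim: j X Y => [|j IHj] X Y leXY //=.
have le_f := fmap_loewner_mono A Q leXY.
have le_trf := loewner_le_trace le_f.
have le_Jf := IHj _ _ le_f.
apply: (big_ind2 (fun x y : R => x <= y)); first 2 last.
- move=> m _; have /andP[lam_ge0 lam_le1] := lam_unit m.
  have lam'_ge0 : 0 <= 1 - lam m by rewrite subr_ge0.
  apply: lerD; last exact: ler_wpM2l.
  by rewrite !lerD2r ler_wpM2l // lerD2l ler_wpM2l.
- by apply: lerD => //; apply: ler_wpM2l.
- by move=> *; apply: le_min2.
Qed.

End CostToGo.

Theorem lemma2 (R : realFieldType) (n M : nat) (p : 'I_M -> nat)
    (A Q P0 : 'M[R]_n) (C : forall m : 'I_M, 'M[R]_(p m, n))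
    (Rv : forall m : 'I_M, 'M[R]_(p m))
    (lam E : 'I_M -> R) (beta : R) (K : nat)
    (hM : (1 <= M)%N)
    (hQ : psd Q) (hP0 : psd P0) (hR : forall m, pd (Rv m))
    (hlam : forall m, 0 < lam m <= 1) (hE : forall m, 0 <= E m)
    (hbeta : 0 < beta < 1) (hK : (1 <= K)%N) :
  forall k : nat, (1 <= k <= K.+1)%N ->
  forall X Y : 'M[R]_n,
    inS A Q P0 C Rv X -> inS A Q P0 C Rv Y -> loewner_le X Y ->
    J A Q P0 C Rv lam E beta K k X <= J A Q P0 C Rv lam E beta K k Y.
Proof.
move=> k _ X Y _ _ leXY; apply: Jrev_loewner_mono leXY.
- by move=> m; have /andP[/ltW -> ->] := hlam m.
- by case/andP: hbeta => /ltW.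
Qed.
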